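(* Let $\bm{a}=(\alpha_1,\dots,\alpha_m)$ be a basis vector of $\mathbb{F}_{q^m}$ over $\mathbb{F}_q$ and let $\varphi$ be an $\mathbb{F}_q$-linear automorphism of $\mathbb{F}_{q^m}$. Let $A$ be the $m\times m$ matrix over $\mathbb{F}_{q^m}$ whose $i$-th row is $\varphi(\alpha_i\bm{a})=(\varphi(\alpha_i\alpha_1),\dots,\varphi(\alpha_i\alpha_m))$. Then $\varphi$ is fully linear over $\mathbb{F}_{q^m}$ if and only if $A$ has rank $1$ over $\mathbb{F}_{q^m}$.
   Context: $q$ is a prime power (the paper takes $q$ a power of $2$). A basis vector of $\mathbb{F}_{q^m}$ over $\mathbb{F}_q$ is a vector in $\mathbb{F}_{q^m}^m$ whose components form an $\mathbb{F}_q$-basis of $\mathbb{F}_{q^m}$. An $\mathbb{F}_q$-linear automorphism of $\mathbb{F}_{q^m}$ is a bijective $\mathbb{F}_q$-linear map $\varphi:\mathbb{F}_{q^m}\to\mathbb{F}_{q^m}$, applied componentwise to vectors; for a set $\mathcal{V}\subseteq\mathbb{F}_{q^m}^n$, $\varphi(\mathcal{V})=\{\varphi(\bm{v}):\bm{v}\in\mathcal{V}\}$. For an $\mathbb{F}_{q^m}$-linear code $\mathcal{C}\subseteq\mathbb{F}_{q^m}^n$, $\varphi$ is called linear on $\mathcal{C}$ if $\varphi(\mathcal{C})$ is an $\mathbb{F}_{q^m}$-linear subspace of $\mathbb{F}_{q^m}^n$. $\varphi$ is called fully linear over $\mathbb{F}_{q^m}$ if it is linear on every $\mathbb{F}_{q^m}$-linear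 code $\mathcal{C}\subseteq\mathbb{F}_{q^m}^n$, for every length $n\ge1$. *)

From HB Require Import structures.
From mathcomp Require Import all_boot all_order all_algebra all_field.
Set Implicit Arguments. Unset Strict Implicit. Unset Printing Implicit Defensive.
Import GRing.Theory.
Local Open Scope ring_scope.

(* F plays the role of F_q (a finite field), L the role of F_{q^m}
   (a finite-dimensional field extension of F). *)

Definition is_Lsubspace (L : fieldType) (n : nat) (C : 'rV[L]_n -> Prop) :=
  C 0 /\ (forall (c : L) (u v : 'rV[L]_n), C u -> C v -> C (c *: u + v)).

Definition img_code (L : fieldType) (n : nat) (phi : L -> L)
    (C : 'rV[L]_n -> Prop) : 'rV[L]_n -> Prop :=
  fun w => exists2 v, C v & w = map_mx phi v.

Definition linear_on (L : fieldType) (n : nat) (phi : L -> L)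
    (C : 'rV[L]_n -> Prop) := is_Lsubspace (img_code phi C).

Definition fully_linear (L : fieldType) (phi : L -> L) :=
  forall (n : nat) (C : 'rV[L]_n -> Prop),
    (0 < n)%N -> is_Lsubspace C -> linear_on phi C.

From HB Require Import structures.
From mathcomp Require Import all_boot all_order all_algebra all_field.
Local Open Scope ring_scope.
Import GRing.Theory.
Set Implicit Arguments. Unset Strict Implicit.

(* Both sides are F-bilinear in each
       pair of positions, so the identity extends from the basis to
       phi(x y) phi(z w) = phi(x w) phi(z y) for all x, y, z, w; taking
       z = w = 1 gives quasi-multiplicativity. *)

Section BasisExtension.
Variables (F : fieldType) (U : vectType F) (V : lmodType F).
Variables (n : nat) (a : n.-tuple U).
Hypothesis a_basis : basis_of fullv a.

Lemma span_ind (P : U -> Prop) :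
  P 0 -> (forall (c : F) u v, P u -> P v -> P (c *: u + v)) ->
  (forall i, P (tnth a i)) -> forall x, P x.
Proof.
move=> P0 P_lin P_basis x; rewrite (coord_basis a_basis (memvf x)).
apply: (big_ind P) => // [u v Pu Pv|i _]; first by rewrite -[u]scale1r; apply: P_lin.
by rewrite -[_ *: _]addr0 -tnth_nth; apply: P_lin.
Qed.

Lemma linear_map0 (f : U -> V) : linear f -> f 0 = 0.
Proof. by move=> f_lin; have := f_lin (-1) 0 0; rewrite scaler0 addr0 scaleN1r addNr. Qed.

Lemma linear_basis_ext (f g : U -> V) : linear f -> linear g ->
  (forall i, f (tnth a i) = g (tnth a i)) -> forall x, f x = g x.
Proof.
move=> f_lin g_lin; apply: span_ind; first by rewrite !linear_map0.
by move=> c u v fgu fgv; rewrite f_lin g_lin fgu fgv.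
Qed.

Definition is_bilinear (b : U -> U -> V) :=
  (forall y, linear (b^~ y)) /\ (forall x, linear (b x)).

Lemma bilinear_basis_ext (b b' : U -> U -> V) : is_bilinear b -> is_bilinear b' ->
  (forall i j, b (tnth a i) (tnth a j) = b' (tnth a i) (tnth a j)) ->
  forall x y, b x y = b' x y.
Proof.
move=> [bl br] [bl' br'] bb' x y.
apply: (linear_basis_ext (br x) (br' x)) => j {y}.
by apply: (linear_basis_ext (bl _) (bl' _)) => i; apply: bb'.
Qed.

End BasisExtension.

Section ProductMaps.
Variables (F : fieldType) (L : fieldExtType F) (phi : {linear L -> L}).

Lemma linear_mulr (f : L -> L) (k : L) : linear f -> linear (fun x => f x * k).
Proof. by move=> f_lin c u v; rewrite f_lin mulrDl scalerAl. Qed.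

Lemma linear_mull (f : L -> L) (k : L) : linear f -> linear (fun x => k * f x).
Proof. by move=> f_lin c u v; rewrite f_lin mulrDr scalerAr. Qed.

Lemma linear_phi_comp (f : L -> L) : linear f -> linear (fun x => phi (f x)).
Proof. by move=> f_lin c u v; rewrite f_lin linearP. Qed.

Lemma bilinear_phi_mul (k : L) : is_bilinear (fun x y => phi (x * y) * k).
Proof.
by split=> [y|x]; apply/linear_mulr/linear_phi_comp; [apply: linear_mulr | apply: linear_mull].
Qed.

Lemma bilinear_prod (f g : L -> L) : linear f -> linear g ->
  is_bilinear (fun x y => f x * g y).
Proof. by move=> f_lin g_lin; split=> [y|x]; [apply: linear_mulr | apply: linear_mull]. Qed.

Lemma bilinear_zero : is_bilinear (fun _ _ : L => 0 : L).
Proof. by split=> _ c u v; rewrite scaler0 addr0. Qed.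

End ProductMaps.

Lemma rank1_outer (K : fieldType) (m n : nat) (A : 'M[K]_(m, n)) :
  \rank A = 1%N -> exists (u : 'I_m -> K) (v : 'I_n -> K), forall i j, A i j = u i * v j.
Proof.
move=> rkA.
have [X [B AXB]] : exists (X : 'M[K]_(m, \rank A)) (B : 'M[K]_(\rank A, n)), A = X *m B.
  by exists (A *m pinvmx (row_base A)), (row_base A); rewrite mulmxKpV // eq_row_base.
move: X B AXB; rewrite rkA => X B AXB.
by exists (X^~ 0), (B 0) => i j; rewrite AXB mxE big_ord1.
Qed.

Lemma rank_outer_le1 (K : fieldType) (m n : nat) (u : 'I_m -> K) (v : 'I_n -> K) :
  (\rank (\matrix_(i < m, j < n) (u i * v j)%R) <= 1)%N.
Proof.
have -> : \matrix_(i < m, j < n) (u i * v j) = \col_i u i *m \row_j v j.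
  by apply/matrixP => i j; rewrite !mxE big_ord1 !mxE.
exact: mulmx_max_rank.
Qed.

(* x |-> phi x / phi 1 is multiplicative. *)
Definition quasi_multiplicative (L : fieldType) (phi : L -> L) :=
  forall x y, phi (x * y) * phi 1 = phi x * phi y.

Section FullLinearity.
Variables (F : fieldType) (L : fieldExtType F) (phi : {linear L -> L}).
Hypothesis phi_bij : bijective phi.

Lemma phi1_neq0 : phi 1 != 0.
Proof.
apply/eqP => phi1_0; have : phi 1 = phi 0 by rewrite phi1_0 linear0.
by move/(bij_inj phi_bij)/eqP; rewrite oner_eq0.
Qed.

(* Full linearity, applied to the code {(t, y t)}, forces quasi-multiplicativity. *)
Lemma fully_linear_quasi_mult : fully_linear phi -> quasi_multiplicative phi.
Proof.
move=> phi_fl x y.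
pose C (v : 'rV[L]_2) := v 0 1 = y * v 0 0.
have C_sub : is_Lsubspace C.
  split=> [|c u v]; rewrite /C !mxE; first by rewrite mulr0.
  by move=> -> ->; rewrite mulrDr mulrCA.
have [img0 img_lin] := phi_fl 2%N C erefl C_sub.
pose e : 'rV[L]_2 := \row_j (if j == 0 then 1 else y).
have Ce : C e by rewrite /C !mxE /= mulr1.
have [w Cw Ew] := img_lin (phi x / phi 1) _ _ (ex_intro2 _ _ _ Ce erefl) img0.
have /matrixP Ew' := Ew; have w0 := Ew' 0 0; have w1 := Ew' 0 1.
rewrite !mxE /= addr0 mulfVK ?phi1_neq0 // in w0.
rewrite !mxE /= addr0 Cw -(bij_inj phi_bij w0) in w1.
by rewrite [x * y]mulrC -w1 mulrAC divfK ?phi1_neq0.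
Qed.

(* Quasi-multiplicativity makes phi(c v) a scalar multiple of phi(v), with a
   preimage under phi for the scalar, so phi maps codes to codes. *)
Lemma quasi_mult_fully_linear : quasi_multiplicative phi -> fully_linear phi.
Proof.
move=> phi_qm n C _ [C0 C_lin].
have phiM d z : phi (d * z) = phi d * phi z / phi 1.
  by rewrite -phi_qm mulfK ?phi1_neq0.
have [g phiK gK] := phi_bij.
split; first by exists 0 => //; apply/matrixP => i j; rewrite !mxE linear0.
move=> c _ _ [u Cu ->] [v Cv ->].
exists (g (c * phi 1) *: u + v); first exact: C_lin.
by apply/matrixP => i j; rewrite !mxE linearD /= phiM gK mulrAC mulfK ?phi1_neq0.
Qed.

Lemma fully_linearE : fully_linear phi <-> quasi_multiplicative phi.
Proof. by split; [apply: fully_linear_quasi_mult | apply: quasi_mult_fully_linear]. Qed.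

End FullLinearity.

Section RankOne.
Variables (F : fieldType) (L : fieldExtType F) (phi : {linear L -> L}).
Variables (m : nat) (a : m.-tuple L).
Hypothesis a_basis : basis_of fullv a.

Let A := \matrix_(i < m, j < m) phi (tnth a i * tnth a j).

Lemma minors_extend :
  (forall i j k l, A i j * A k l = A i l * A k j) ->
  forall x y z w, phi (x * y) * phi (z * w) = phi (x * w) * phi (z * y).
Proof.
move=> minors.
have lin_r w : linear (fun x => phi (x * w)) by apply/linear_phi_comp/linear_mulr.
have lin_l z : linear (fun y => phi (z * y)) by apply/linear_phi_comp/linear_mull.
have basis_zw x y k l : phi (x * y) * phi (tnth a k * tnth a l)
    = phi (x * tnth a l) * phi (tnth a k * y).
  apply: (bilinear_basis_ext a_basis (bilinear_phi_mul phi _)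
    (bilinear_prod (lin_r (tnth a l)) (lin_l (tnth a k)))) => i j.
  by have := minors i j k l; rewrite !mxE.
move=> x y z w; rewrite mulrC [RHS]mulrC.
apply: (bilinear_basis_ext a_basis (bilinear_phi_mul phi _)
  (bilinear_prod (lin_r y) (lin_l x))) => k l.
by rewrite /= mulrC basis_zw mulrC.
Qed.

(* Step (2): A is the nonzero outer product of (phi a_i / phi 1) and (phi a_j). *)
Lemma quasi_mult_rank1 : bijective phi -> quasi_multiplicative phi -> \rank A = 1%N.
Proof.
move=> phi_bij phi_qm; have phi1 := phi1_neq0 phi_bij.
have A_outer : A = \matrix_(i, j) (phi (tnth a i) / phi 1 * phi (tnth a j)).
  by apply/matrixP => i j; rewrite !mxE mulrAC -phi_qm mulfK.
have A_neq0 : A != 0.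
  apply: contra phi1 => /eqP A0.
  have basis0 i j : phi (tnth a i * tnth a j) * phi 1 = 0.
    by move/matrixP/(_ i j): A0; rewrite !mxE => ->; rewrite mul0r.
  have := bilinear_basis_ext a_basis (bilinear_phi_mul phi (phi 1)) (bilinear_zero L) basis0 1 1.
  by rewrite mulr1 => /eqP; rewrite mulf_eq0 orbb.
apply/eqP; rewrite eqn_leq lt0n mxrank_eq0 A_neq0 andbT A_outer.
exact: rank_outer_le1.
Qed.

(* Step (3): rank one makes the 2x2 minors of A vanish; extend them to L
   and specialize the last two arguments to 1. *)
Lemma rank1_quasi_mult : \rank A = 1%N -> quasi_multiplicative phi.
Proof.
move=> /rank1_outer [u [v Auv]] x y.
have minors i j k l : A i j * A k l = A i l * A k j.
  by rewrite !Auv mulrACA [v j * _]mulrC mulrACA.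
by have := minors_extend minors x y 1 1; rewrite !mulr1 [1 * y]mul1r.
Qed.

End RankOne.

Theorem mainTheorem2 (F : finFieldType) (L : fieldExtType F) (m : nat)
    (a : m.-tuple L) (phi : {linear L -> L}) :
  basis_of fullv a ->
  bijective phi ->
  (fully_linear phi <->
   \rank (\matrix_(i < m, j < m) phi (tnth a i * tnth a j)) = 1%N).
Proof.
move=> a_basis phi_bij; apply: iff_trans (fully_linearE phi_bij) _.
split; first exact: quasi_mult_rank1.
exact: rank1_quasi_mult.
Qed.
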